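(* Let $\varGamma=\sum_{j=1}^N\mathrm{graph}(g_j)$, where $g_1,\dots,g_N$ are rational maps (not necessarily distinct), and put $D=d_1(\varGamma)=\sum_j\deg g_j$. For every $n\in\mathbb{Z}_+$, the number of repelling fixed points of $\varGamma^{\circ n}$, counted according to multiplicity, is at most $D^n+N^n$.
   Context: The $n$-th iterate is $\varGamma^{\circ n}=\sum_{(j_1,\dots,j_n)}\mathrm{graph}(g_{j_n}\circ\cdots\circ g_{j_1})$. A point $x$ is a repelling fixed point of $\varGamma^{\circ n}$ if it is a repelling fixed point of some $g_{j_n}\circ\cdots\circ g_{j_1}$. Its multiplicity is the number of index sequences $(j_1,\dots,j_n)$ for which this holds. *)

(* Rational maps over an algebraically closed numeric field C
   (e.g. the complex numbers), acting on the Riemann sphere  option C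
   (None = the point at infinity). *)
From HB Require Import structures.
From mathcomp Require Import all_boot all_order all_algebra.
Set Implicit Arguments. Unset Strict Implicit. Unset Printing Implicit Defensive.
Import Order.TTheory GRing.Theory Num.Theory.
Local Open Scope ring_scope.

Section RatMaps.
Variable C : numClosedFieldType.

(* A rational map z |-> p(z)/q(z), given by a pair (p, q) of polynomials. *)
Definition ratmap := ({poly C} * {poly C})%type.

Definition rdeg (g : ratmap) : nat := (maxn (size g.1) (size g.2)).-1.

Definition is_ratmap (g : ratmap) : bool := coprimep g.1 g.2 && (0 < rdeg g)%N.

(* F^h(a, b) = sum_i F_i a^i b^(d-i): homogenisation of F in degree d,
   evaluated at polynomials a, b *)
Definition homog (d : nat) (F a b : {poly C}) : {poly C} :=
  \sum_(i < d.+1) F`_i *: (a ^+ i * b ^+ (d - i)).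

Definition rcomp (g2 g1 : ratmap) : ratmap :=
  (homog (rdeg g2) g2.1 g1.1 g1.2, homog (rdeg g2) g2.2 g1.1 g1.2).

Definition rid : ratmap := ('X, 1).

(* g_{j_n} o ... o g_{j_1} for the sequence s = (j_1, ..., j_n) *)
Definition rcomp_seq (I : Type) (g : I -> ratmap) (s : seq I) : ratmap :=
  foldl (fun acc j => rcomp (g j) acc) rid s.

(* conjugate by w = 1/z :  w |-> 1 / g(1/w) *)
Definition rinvconj (g : ratmap) : ratmap :=
  let d := rdeg g in (homog d g.2 1 'X, homog d g.1 1 'X).

Definition mult_fin (g : ratmap) (z : C) : C :=
  (g.1^`() * g.2 - g.1 * g.2^`()).[z] / (g.2.[z]) ^+ 2.

Definition repelling_fixed (g : ratmap) (x : option C) : bool :=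
  match x with
  | Some z => [&& g.2.[z] != 0, g.1.[z] == z * g.2.[z] & 1 < `|mult_fin g z|]
  | None => let h := rinvconj g in
            [&& h.2.[0] != 0, h.1.[0] == 0 & 1 < `|mult_fin h 0|]
  end.

(* multiplicity of x as a repelling fixed point of Gamma^{o n}, where
   Gamma = sum_j graph(g_j): the number of index sequences (j_1,...,j_n)
   such that x is a repelling fixed point of g_{j_n} o ... o g_{j_1} *)
Definition rep_mult (N n : nat) (g : 'I_N -> ratmap) (x : option C) : nat :=
  #|[set s : n.-tuple 'I_N | repelling_fixed (rcomp_seq g s) x]|.

End RatMaps.

(* A rational map p/q of degree d has at most d + 1 repelling fixed points:
   the finite ones are roots of p - X q, a polynomial of size at most d + 2, and
   when infinity is repelling the top coefficient of p - X q vanishes.  Since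
   the degree of a composite is at most the product of the degrees, summing
   over the N^n index sequences gives at most
   sum_s (prod_{j in s} deg g_j + 1) = D^n + N^n. *)
From HB Require Import structures.
From mathcomp Require Import all_boot all_order all_algebra.
From mathcomp Require Import zify ring.

Set Implicit Arguments.
Unset Strict Implicit.
Unset Printing Implicit Defensive.
Import Order.TTheory GRing.Theory Num.Theory.
Local Open Scope ring_scope.

Section RationalMaps.
Variable C : numClosedFieldType.
Implicit Types (g h : ratmap C) (F a b : {poly C}).

Lemma size_homog_leq d F a b :
  (size (homog d F a b) <= ((maxn (size a) (size b)).-1 * d).+1)%N.
Proof.
rewrite /homog; set e := (maxn (size a) (size b)).-1.
apply: (big_ind (fun p : {poly C} => (size p <= (e * d).+1)%N)).
- by rewrite size_poly0.
- by move=> p q hp hq; rewrite (leq_trans (size_polyD _ _)) // geq_max hp hq.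
move=> i _; apply: leq_trans (size_scale_leq _ _) _.
apply: leq_trans (size_polyMleq _ _) _.
have ha := size_poly_exp_leq a i; have hb := size_poly_exp_leq b (d - i).
have hi : (i <= d)%N by rewrite -ltnS.
have hea : ((size a).-1 * i <= e * i)%N by rewrite leq_mul2r; apply/orP; right; lia.
have heb : ((size b).-1 * (d - i) <= e * (d - i))%N.
  by rewrite leq_mul2r; apply/orP; right; lia.
have he : (e * i + e * (d - i) = e * d)%N by rewrite -mulnDr subnKC.
lia.
Qed.

Lemma rdeg_rcomp_leq g2 g1 : (rdeg (rcomp g2 g1) <= rdeg g2 * rdeg g1)%N.
Proof.
have h1 := size_homog_leq (rdeg g2) g2.1 g1.1 g1.2.
have h2 := size_homog_leq (rdeg g2) g2.2 g1.1 g1.2.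
rewrite -/(rdeg g1) mulnC in h1 h2; rewrite /rdeg /rcomp /= -/(rdeg g1).
move: h1 h2; set m := (_ * _)%N; set sa := size _; set sb := size _; lia.
Qed.

Lemma rdeg_rid : rdeg (rid C) = 1%N.
Proof. by rewrite /rdeg /rid /= size_polyX size_poly1. Qed.

Lemma rdeg_rcomp_seq_leq (I : Type) (g : I -> ratmap C) (s : seq I) :
  (rdeg (rcomp_seq g s) <= \prod_(j <- s) rdeg (g j))%N.
Proof.
rewrite /rcomp_seq -[X in (_ <= X)%N]mul1n -{1}rdeg_rid.
elim: s (rid C) => [|j s IHs] acc /=; first by rewrite big_nil muln1.
apply: leq_trans (IHs _) _; rewrite big_cons mulnA leq_mul2r mulnC.
by rewrite rdeg_rcomp_leq orbT.
Qed.

Lemma homog_1X_horner0 d F : (homog d F 1 'X).[0] = F`_d.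
Proof.
rewrite /homog horner_sum big_ord_recr /= subnn expr0 expr1n mulr1 hornerZ.
rewrite hornerC mulr1 big1 ?add0r // => i _.
rewrite hornerZ expr1n mul1r hornerXn expr0n.
by rewrite subn_eq0 leqNgt ltn_ord mulr0.
Qed.

(* The fixed points of [p/q] in the finite plane are the roots of [p - X q]. *)
Definition fixpoly h : {poly C} := h.1 - 'X * h.2.

Lemma repelling_fixed_root h z :
  repelling_fixed h (Some z) -> root (fixpoly h) z.
Proof.
move=> /and3P [_ /eqP hz _].
by rewrite /root /fixpoly !hornerE hz subrr.
Qed.

(* If p = X q, then g is the identity away from the poles, of multiplier 1. *)
Lemma fixpoly_eq0_not_repelling h z :
  fixpoly h = 0 -> ~~ repelling_fixed h (Some z).
Proof.
move=> /eqP; rewrite subr_eq0 => /eqP h1.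
apply/and3P => -[hq _]; suff -> : mult_fin h z = 1 by rewrite normr1 ltxx.
rewrite /mult_fin h1 derivM derivX mul1r !hornerE.
by field.
Qed.

Lemma size_fixpoly_leq h :
  (size (fixpoly h) + repelling_fixed h None <= (maxn (size h.1) (size h.2)).+1)%N.
Proof.
set m := maxn _ _.
have hP : (size (fixpoly h) <= m.+1)%N.
  rewrite (leq_trans (size_polyD _ _)) // size_polyN geq_max.
  rewrite ltnW ?ltnS ?leq_maxl //=.
  rewrite (leq_trans (size_polyMleq _ _)) // size_polyX.
  by rewrite addSn add1n ltnS leq_maxr.
case hN: (repelling_fixed h None); last by rewrite addn0.
move: hN => /and3P [_ /eqP h0 _].
rewrite /rinvconj /= homog_1X_horner0 in h0.
have Pm : (fixpoly h)`_m = 0.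
  rewrite /fixpoly coefB coefXM nth_default ?leq_maxl // sub0r.
  by case: (m == 0%N); rewrite ?oppr0 // h0 oppr0.
rewrite addn1 ltn_neqAle hP andbT; apply/eqP => hsize.
have /eqP : lead_coef (fixpoly h) = 0 by rewrite lead_coefE hsize.
by rewrite lead_coef_eq0 => /eqP hP0; rewrite hP0 size_poly0 in hsize.
Qed.

Lemma size_option_uniq {T : eqType} (s : seq (option T)) :
  uniq s -> size s = (size (pmap id s) + (None \in s))%N.
Proof.
move=> us; rewrite size_pmap -(count_predC (fun x : option T => x)) -count_uniq_mem //.
by congr (_ + _)%N; apply: eq_count => -[].
Qed.

Lemma count_repelling_fixed_leq h (xs : seq (option C)) :
  uniq xs -> (count (repelling_fixed h) xs <= (rdeg h).+1)%N.
Proof.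
move=> uxs; set fs := filter (repelling_fixed h) xs.
have ufs : uniq fs by exact: filter_uniq.
rewrite -size_filter -/fs (size_option_uniq ufs).
have fs_rep x : x \in fs -> repelling_fixed h x by rewrite mem_filter => /andP [].
have hNone : ((None \in fs) <= repelling_fixed h None)%N.
  by case: (None \in fs) (fs_rep None) => // ->.
have [hP0 | hP] := eqVneq (fixpoly h) 0.
  suff -> : pmap id fs = [::] by rewrite /= (leq_trans (leq_b1 _)).
  apply/eqP; rewrite -size_eq0 size_pmap eqn0Ngt -has_count.
  apply/hasPn => -[z|] //= /fs_rep.
  by rewrite (negbTE (fixpoly_eq0_not_repelling z hP0)).
have roots : all (root (fixpoly h)) (pmap id fs).
  by apply/allP => z; rewrite mem_pmap map_id => /fs_rep /repelling_fixed_root.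
have uroots : uniq (pmap id fs) by apply: (pmap_uniq (g := Some)) => // -[].
have := max_poly_roots hP roots uroots; have := size_fixpoly_leq h.
rewrite /rdeg; case: (None \in fs) hNone; case: (repelling_fixed h None) => //= _.
all: move: (size (pmap id fs)) (size (fixpoly h)) (maxn _ _) => r p m; lia.
Qed.

End RationalMaps.

Lemma sum_tuple_prod_nat (n N : nat) (a : 'I_N -> nat) :
  (\sum_(s : n.-tuple 'I_N) \prod_(j <- s) a j = (\sum_(j < N) a j) ^ n)%N.
Proof.
rewrite -[in RHS](card_ord n) -prod_nat_const (eq_bigl xpredT) //.
rewrite bigA_distr_bigA /= (reindex (@finfun_of_tuple _ n)) /=; last first.
  by exists tuple_of_finfun => x _; rewrite ?finfun_of_tupleK ?tuple_of_finfunK.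
by apply: eq_bigr => s _; rewrite big_tuple; apply: eq_bigr => i _; rewrite ffunE.
Qed.

Lemma sum_rep_mult (C : numClosedFieldType) (N n : nat) (g : 'I_N -> ratmap C)
    (xs : seq (option C)) :
  (\sum_(x <- xs) rep_mult n g x
   = \sum_(s : n.-tuple 'I_N) count (repelling_fixed (rcomp_seq g s)) xs)%N.
Proof.
rewrite /rep_mult; under eq_bigr => x _ do rewrite -sum1_card big_mkcond /=.
rewrite exchange_big /=; apply: eq_bigr => s _.
by rewrite -sum1_count [RHS]big_mkcond /=; apply: eq_bigr => x _; rewrite inE.
Qed.

Theorem mainTheorem7 (C : numClosedFieldType) (N : nat) (g : 'I_N -> ratmap C)
  (hg : forall j, is_ratmap (g j)) (n : nat) (hn : (0 < n)%N)
  (xs : seq (option C)) (hxs : uniq xs) :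
  (\sum_(x <- xs) rep_mult n g x <= (\sum_(j < N) rdeg (g j)) ^ n + N ^ n)%N.
Proof.
have -> : (N ^ n = \sum_(s : n.-tuple 'I_N) 1)%N.
  by rewrite sum1_card card_tuple card_ord.
rewrite sum_rep_mult -sum_tuple_prod_nat -big_split /=.
apply: leq_sum => s _; rewrite addn1.
apply: leq_trans (count_repelling_fixed_leq _ hxs) _.
by rewrite ltnS rdeg_rcomp_seq_leq.
Qed.
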